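(* Let $M$ be an oriented surface with a Riemannian metric, $A$ an $\mathfrak{su}(2)$-valued $1$-form on $M$, and $b:SM\to SU(2)$ smooth with $X(b)+Ab=0$ and finite Fourier expansion $b=\sum_{k=-N}^{N}b_k$ with $N\ge1$ and $b_{-N}\ne0$. Fix $\xi\in\mathbb{C}^2$. In local isothermal coordinates $(x,y)$ with metric $e^{2\lambda}(dx^2+dy^2)$ and the induced coordinates $(x,y,\theta)$ on $SM$, write $b_{-N}=h(x,y)e^{-iN\theta}$ and $A=A_x\,dx+A_y\,dy$, $A_{\bar z}=\tfrac12(A_x+iA_y)$. Then $$\bar\partial\big(e^{-N\lambda}h\xi\big)+A_{\bar z}\,e^{-N\lambda}h\xi=0,$$ i.e. the local section $e^{-N\lambda}h\xi\,(d\bar z)^N$ of $(M\times\mathbb{C}^2)\otimes K^{\otimes -N}$ is $\bar\partial_A$-holomorphic.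
   Context: $SM$ is the unit tangent bundle, $X$ the geodesic vector field, $V$ the vertical vector field; $A$ is regarded as the function $A(x,v)=A_x(v)$ on $SM$. $L^2(SM,\mathbb{M}_2(\mathbb{C}))=\bigoplus_{k\in\mathbb{Z}}H_k$ where $-iV$ acts as $k$ on $H_k$, and $b_k$ is the component of $b$ in $H_k$. $\theta$ is the angle between $v$ and $\partial/\partial x$, so $V=\partial/\partial\theta$. $\bar\partial=\tfrac12(\partial_x+i\partial_y)$, and $K$ is the canonical line bundle of $M$. *)

From Stdlib Require Import Reals List ZArith.
From Coquelicot Require Import Coquelicot.
Open Scope R_scope.

(* partial derivative of a real function of three real variables (x,y,theta)
   in direction i (0 = x, 1 = y, anything else = theta) *)
Definition pd (i : nat) (f : R -> R -> R -> R) : R -> R -> R -> R :=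
  fun x y t =>
    match i with
    | O => Derive (fun s => f s y t) x
    | S O => Derive (fun s => f x s t) y
    | _ => Derive (fun s => f x y s) t
    end.

Definition iter_pd (l : list nat) (f : R -> R -> R -> R) : R -> R -> R -> R :=
  fold_right pd f l.

Definition cont3_at (f : R -> R -> R -> R) (x y t : R) : Prop :=
  forall eps, 0 < eps -> exists delta, 0 < delta /\
    forall x' y' t', Rabs (x' - x) < delta -> Rabs (y' - y) < delta ->
      Rabs (t' - t) < delta -> Rabs (f x' y' t' - f x y t) < eps.

Definition open2 (U : R -> R -> Prop) : Prop :=
  forall x y, U x y -> exists r, 0 < r /\
    forall x' y', Rabs (x' - x) < r -> Rabs (y' - y) < r -> U x' y'.

Definition smooth3_on (U : R -> R -> Prop) (f : R -> R -> R -> R) : Prop :=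
  forall (l : list nat) x y t, U x y ->
    cont3_at (iter_pd l f) x y t /\
    ex_derive (fun s => iter_pd l f s y t) x /\
    ex_derive (fun s => iter_pd l f x s t) y /\
    ex_derive (fun s => iter_pd l f x y s) t.

Definition smooth2_on (U : R -> R -> Prop) (g : R -> R -> R) : Prop :=
  smooth3_on U (fun x y _ => g x y).

Record M2 := mkM2 { m11 : C; m12 : C; m21 : C; m22 : C }.
Definition C2 : Type := (C * C)%type.

Definition M2add (a b : M2) : M2 :=
  mkM2 (Cplus (m11 a) (m11 b)) (Cplus (m12 a) (m12 b))
       (Cplus (m21 a) (m21 b)) (Cplus (m22 a) (m22 b)).
Definition M2scal (c : C) (a : M2) : M2 :=
  mkM2 (Cmult c (m11 a)) (Cmult c (m12 a)) (Cmult c (m21 a)) (Cmult c (m22 a)).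
Definition M2mul (a b : M2) : M2 :=
  mkM2 (Cplus (Cmult (m11 a) (m11 b)) (Cmult (m12 a) (m21 b)))
       (Cplus (Cmult (m11 a) (m12 b)) (Cmult (m12 a) (m22 b)))
       (Cplus (Cmult (m21 a) (m11 b)) (Cmult (m22 a) (m21 b)))
       (Cplus (Cmult (m21 a) (m12 b)) (Cmult (m22 a) (m22 b))).
Definition M2zero : M2 := mkM2 (RtoC 0) (RtoC 0) (RtoC 0) (RtoC 0).
Definition M2one : M2 := mkM2 (RtoC 1) (RtoC 0) (RtoC 0) (RtoC 1).
Definition M2adj (a : M2) : M2 :=
  mkM2 (Cconj (m11 a)) (Cconj (m21 a)) (Cconj (m12 a)) (Cconj (m22 a)).
Definition M2det (a : M2) : C :=
  Cminus (Cmult (m11 a) (m22 a)) (Cmult (m12 a) (m21 a)).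
Definition M2tr (a : M2) : C := Cplus (m11 a) (m22 a).

Definition in_SU2 (a : M2) : Prop := M2mul (M2adj a) a = M2one /\ M2det a = RtoC 1.
Definition in_su2 (a : M2) : Prop := M2adj a = M2scal (RtoC (-1)) a /\ M2tr a = RtoC 0.

Definition M2app (a : M2) (v : C2) : C2 :=
  (Cplus (Cmult (m11 a) (fst v)) (Cmult (m12 a) (snd v)),
   Cplus (Cmult (m21 a) (fst v)) (Cmult (m22 a) (snd v))).
Definition C2add (v w : C2) : C2 := (Cplus (fst v) (fst w), Cplus (snd v) (snd w)).
Definition C2scal (c : C) (v : C2) : C2 := (Cmult c (fst v), Cmult c (snd v)).
Definition C2zero : C2 := (RtoC 0, RtoC 0).

Definition smoothC3_on U (f : R -> R -> R -> C) : Prop :=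
  smooth3_on U (fun x y t => fst (f x y t)) /\ smooth3_on U (fun x y t => snd (f x y t)).
Definition smoothM3_on U (f : R -> R -> R -> M2) : Prop :=
  smoothC3_on U (fun x y t => m11 (f x y t)) /\ smoothC3_on U (fun x y t => m12 (f x y t)) /\
  smoothC3_on U (fun x y t => m21 (f x y t)) /\ smoothC3_on U (fun x y t => m22 (f x y t)).
Definition smoothM2_on U (f : R -> R -> M2) : Prop :=
  smoothM3_on U (fun x y _ => f x y).

Definition DerC (f : R -> C) (s : R) : C :=
  (Derive (fun u => fst (f u)) s, Derive (fun u => snd (f u)) s).
Definition ex_derC (f : R -> C) (s : R) : Prop :=
  ex_derive (fun u => fst (f u)) s /\ ex_derive (fun u => snd (f u)) s.
Definition DerM (f : R -> M2) (s : R) : M2 :=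
  mkM2 (DerC (fun u => m11 (f u)) s) (DerC (fun u => m12 (f u)) s)
       (DerC (fun u => m21 (f u)) s) (DerC (fun u => m22 (f u)) s).
Definition DerC2 (f : R -> C2) (s : R) : C2 :=
  (DerC (fun u => fst (f u)) s, DerC (fun u => snd (f u)) s).
Definition ex_derC2 (f : R -> C2) (s : R) : Prop :=
  ex_derC (fun u => fst (f u)) s /\ ex_derC (fun u => snd (f u)) s.

(** * The geometry in isothermal coordinates
    Metric e^{2 lam}(dx^2+dy^2) on U; SM = U x S^1 with theta the angle
    between v and d/dx, so v = e^{-lam}(cos theta, sin theta). *)

Definition Xgeod (lam : R -> R -> R) (b : R -> R -> R -> M2) (x y t : R) : M2 :=
  let lx := Derive (fun s => lam s y) x in
  let ly := Derive (fun s => lam x s) y in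
  M2scal (RtoC (exp (- lam x y)))
    (M2add (M2add (M2scal (RtoC (cos t)) (DerM (fun s => b s y t) x))
                  (M2scal (RtoC (sin t)) (DerM (fun s => b x s t) y)))
           (M2scal (RtoC (- lx * sin t + ly * cos t)) (DerM (fun s => b x y s) t))).

(* A as a function on SM: A(x,v) = A_x(v) = e^{-lam}(cos t A_x + sin t A_y) *)
Definition A_SM (lam : R -> R -> R) (Ax Ay : R -> R -> M2) (x y t : R) : M2 :=
  M2scal (RtoC (exp (- lam x y)))
    (M2add (M2scal (RtoC (cos t)) (Ax x y)) (M2scal (RtoC (sin t)) (Ay x y))).

Definition eiC (s : R) : C := (cos s, sin s).

Definition fourier_sum (N : nat) (c : Z -> R -> R -> M2) (x y t : R) : M2 :=
  fold_right M2add M2zero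
    (map (fun j : nat =>
            let k := (Z.of_nat j - Z.of_nat N)%Z in
            M2scal (eiC (IZR k * t)) (c k x y))
         (seq 0 (2 * N + 1))).

Definition dbar (v : R -> R -> C2) (x y : R) : C2 :=
  C2scal (RtoC (/ 2))
    (C2add (DerC2 (fun s => v s y) x) (C2scal Ci (DerC2 (fun s => v x s) y))).

Definition Azbar (Ax Ay : R -> R -> M2) (x y : R) : M2 :=
  M2scal (RtoC (/ 2)) (M2add (Ax x y) (M2scal Ci (Ay x y))).

From Stdlib Require Import Reals List ZArith Lra Lia FunctionalExtensionality.
From Coquelicot Require Import Coquelicot.
Open Scope R_scope.

(* In the coordinates (x, y, t), X + A is a combination of cos t and sin t with coefficients
   (d_x, d_y, d_t, A_x, A_y) that preserve the Fourier degree in t.  Hence the mode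
   e^{-i(N+1)t} of (X + A) b xi = 0 only involves the modes -N and -N-2 of b xi, and the
   latter vanishes.  Writing that mode out gives
     dbar (b_{-N} xi) - N (dbar lambda) b_{-N} xi + A_zbar b_{-N} xi = 0,
   which is the claim after multiplying by e^{-N lambda}.  Fourier modes are extracted by a
   discrete Fourier transform on 2N+3 equally spaced angles: it is exact on trigonometric
   polynomials whose frequencies fit in a window of 2N+3 consecutive integers, so no
   integration over the fibre is needed. *)

Ltac ring_C :=
  apply injective_projections; cbn [fst snd Cplus Cmult Cminus Copp RtoC Ci]; ring.

Ltac ring_C2 :=
  apply injective_projections; apply injective_projections;
  cbn [fst snd C2add C2scal C2zero M2zero M2app M2add M2scal M2mul Azbar m11 m12 m21 m22
       Cplus Cmult Cminus Copp RtoC Ci];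
  unfold Rdiv; ring.

Fixpoint csum (f : nat -> C) (n : nat) : C :=
  match n with O => RtoC 0 | S n => Cplus (csum f n) (f n) end.

Lemma csum_ext f g n : (forall j, (j < n)%nat -> f j = g j) -> csum f n = csum g n.
Proof.
  induction n as [|n IH]; intros H; simpl; [reflexivity|].
  rewrite H by lia. rewrite IH by (intros j Hj; apply H; lia). reflexivity.
Qed.

Lemma csum_plus f g n : csum (fun j => Cplus (f j) (g j)) n = Cplus (csum f n) (csum g n).
Proof. induction n as [|n IH]; simpl; [ring|]. rewrite IH. ring. Qed.

Lemma csum_mult_l k f n : csum (fun j => Cmult k (f j)) n = Cmult k (csum f n).
Proof. induction n as [|n IH]; simpl; [ring|]. rewrite IH. ring. Qed.

Lemma csum_mult_r k f n : csum (fun j => Cmult (f j) k) n = Cmult (csum f n) k.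
Proof. induction n as [|n IH]; simpl; [ring|]. rewrite IH. ring. Qed.

Lemma csum_const0 n : csum (fun _ => RtoC 0) n = RtoC 0.
Proof. induction n as [|n IH]; simpl; [reflexivity|]. rewrite IH. ring. Qed.

Lemma csum_const1 n : csum (fun _ => RtoC 1) n = RtoC (INR n).
Proof. induction n as [|n IH]; simpl csum; [reflexivity|]. rewrite IH, S_INR. ring_C. Qed.

Lemma csum_switch (a : nat -> nat -> C) m n :
  csum (fun i => csum (a i) n) m = csum (fun j => csum (fun i => a i j) m) n.
Proof.
  induction m as [|m IH]; simpl; [now rewrite csum_const0|].
  rewrite IH, <- csum_plus. reflexivity.
Qed.

Lemma csum_S_l f n : csum f (S n) = Cplus (f O) (csum (fun j => f (S j)) n).
Proof. induction n as [|n IH]; simpl in *; [ring|]. rewrite IH. ring. Qed.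

Lemma csum_geometric (a : nat -> C) q n :
  (forall j, a (S j) = Cmult (a j) q) ->
  Cmult (csum a n) (Cminus q (RtoC 1)) = Cminus (a n) (a O).
Proof.
  intros Ha. induction n as [|n IH]; simpl; [ring|].
  rewrite Ha.
  transitivity (Cplus (Cmult (csum a n) (Cminus q (RtoC 1))) (Cmult (a n) (Cminus q (RtoC 1))));
    [ring|].
  rewrite IH. ring.
Qed.

Lemma eiC_add a b : eiC (a + b) = Cmult (eiC a) (eiC b).
Proof. unfold eiC. rewrite cos_plus, sin_plus. ring_C. Qed.

Lemma eiC_0 : eiC 0 = RtoC 1.
Proof. unfold eiC. rewrite cos_0, sin_0. reflexivity. Qed.

Lemma eiC_2kPI k : eiC (2 * INR k * PI) = RtoC 1.
Proof.
  unfold eiC. rewrite <- (Rplus_0_l (2 * INR k * PI)), cos_period, sin_period.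
  rewrite cos_0, sin_0. reflexivity.
Qed.

Lemma eiC_neq_1 a : 0 < a < 2 * PI -> eiC a <> RtoC 1.
Proof.
  intros [Ha0 Ha2] E. unfold eiC in E. injection E as Ecos Esin.
  destruct (Rlt_le_dec a PI) as [Hlt|Hge].
  - pose proof (sin_gt_0 a Ha0 Hlt). lra.
  - destruct (Req_dec a PI) as [->|Hne].
    + rewrite cos_PI in Ecos. lra.
    + pose proof (sin_lt_0 a (ltac:(lra)) Ha2). lra.
Qed.

Definition sample (M j : nat) : R := 2 * PI * INR j / INR M.

Lemma csum_eiC_samples M m : (0 < M)%nat -> (m < M)%nat ->
  csum (fun j => eiC (INR m * sample M j)) M =
  if Nat.eqb m 0 then RtoC (INR M) else RtoC 0.
Proof.
  intros HM Hm. assert (HMr : 0 < INR M) by (apply lt_0_INR; lia).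
  destruct (Nat.eqb_spec m 0) as [->|Hm0].
  - rewrite <- csum_const1. apply csum_ext. intros j _. now rewrite Rmult_0_l, eiC_0.
  - set (q := eiC (2 * PI * INR m / INR M)).
    assert (Hq : q <> RtoC 1).
    { apply eiC_neq_1. pose proof PI_RGT_0.
      assert (1 <= INR m < INR M) by (split; [apply (le_INR 1)|apply lt_INR]; lia).
      split; [apply Rdiv_lt_0_compat; nra|].
      apply (Rmult_lt_reg_r (INR M)); [lra|]. field_simplify; nra. }
    set (S := csum (fun j => eiC (INR m * sample M j)) M).
    assert (Hgeo : Cmult S (Cminus q (RtoC 1)) = RtoC 0).
    { unfold S. rewrite csum_geometric with (q := q).
      - unfold sample.
        replace (INR m * (2 * PI * INR M / INR M)) with (2 * INR m * PI) by (field; lra).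
        replace (INR m * (2 * PI * INR 0 / INR M)) with 0 by (simpl; field; lra).
        rewrite eiC_2kPI, eiC_0. ring.
      - intros j. unfold q. rewrite <- eiC_add. f_equal. unfold sample. rewrite S_INR. field. lra. }
    assert (Hq1 : Cminus q (RtoC 1) <> RtoC 0).
    { intros E. apply Hq. transitivity (Cplus (Cminus q (RtoC 1)) (RtoC 1)); [ring|].
      rewrite E. ring. }
    transitivity (Cmult (Cmult S (Cminus q (RtoC 1))) (Cinv (Cminus q (RtoC 1))));
      [field; exact Hq1|].
    rewrite Hgeo. ring.
Qed.

Lemma ex_derC_plus f g s : ex_derC f s -> ex_derC g s ->
  ex_derC (fun r => Cplus (f r) (g r)) s.
Proof.
  intros [] []; split; cbn [fst snd Cplus];
    [apply (ex_derive_plus (fun r => fst (f r)) (fun r => fst (g r)))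
    |apply (ex_derive_plus (fun r => snd (f r)) (fun r => snd (g r)))]; assumption.
Qed.

Lemma DerC_plus f g s : ex_derC f s -> ex_derC g s ->
  DerC (fun r => Cplus (f r) (g r)) s = Cplus (DerC f s) (DerC g s).
Proof. intros [] []; unfold DerC; simpl. rewrite !Derive_plus by assumption. reflexivity. Qed.

Lemma ex_derC_mult f g s : ex_derC f s -> ex_derC g s ->
  ex_derC (fun r => Cmult (f r) (g r)) s.
Proof.
  intros [] []; split; cbn [fst snd Cmult];
    [apply (ex_derive_minus (fun r => fst (f r) * fst (g r)) (fun r => snd (f r) * snd (g r)))
    |apply (ex_derive_plus (fun r => fst (f r) * snd (g r)) (fun r => snd (f r) * fst (g r)))];
    apply ex_derive_mult; assumption.
Qed.

Lemma DerC_mult f g s : ex_derC f s -> ex_derC g s ->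
  DerC (fun r => Cmult (f r) (g r)) s = Cplus (Cmult (DerC f s) (g s)) (Cmult (f s) (DerC g s)).
Proof.
  intros [Hf1 Hf2] [Hg1 Hg2]; unfold DerC; cbn [fst snd Cmult].
  rewrite Derive_minus, Derive_plus by (apply ex_derive_mult; assumption).
  rewrite !Derive_mult by assumption. ring_C.
Qed.

Lemma ex_derC_const k s : ex_derC (fun _ => k) s.
Proof. split; apply ex_derive_const. Qed.

Lemma DerC_const k s : DerC (fun _ => k) s = RtoC 0.
Proof. unfold DerC. rewrite !Derive_const. reflexivity. Qed.

Lemma ex_derC_RtoC (e : R -> R) s : ex_derive e s -> ex_derC (fun r => RtoC (e r)) s.
Proof. split; simpl; [assumption | apply ex_derive_const]. Qed.

Lemma DerC_RtoC (e : R -> R) s : DerC (fun r => RtoC (e r)) s = RtoC (Derive e s).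
Proof. unfold DerC; simpl. rewrite Derive_const. reflexivity. Qed.

Lemma ex_derC_csum (F : R -> nat -> C) n s :
  (forall j, (j < n)%nat -> ex_derC (fun r => F r j) s) -> ex_derC (fun r => csum (F r) n) s.
Proof.
  induction n as [|n IH]; cbn [csum]; intros H; [apply ex_derC_const|].
  apply ex_derC_plus; [apply IH; intros; apply H|apply H]; lia.
Qed.

Lemma DerC_csum (F : R -> nat -> C) n s :
  (forall j, (j < n)%nat -> ex_derC (fun r => F r j) s) ->
  DerC (fun r => csum (F r) n) s = csum (fun j => DerC (fun r => F r j) s) n.
Proof.
  induction n as [|n IH]; cbn [csum]; intros H; [apply DerC_const|].
  assert (Hn : forall j, (j < n)%nat -> ex_derC (fun r => F r j) s) by (intros; apply H; lia).
  rewrite DerC_plus; [now rewrite IH | exact (ex_derC_csum F n s Hn) | apply H; lia].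
Qed.

Lemma DerC_ext_loc f g s : locally s (fun r => f r = g r) -> DerC f s = DerC g s.
Proof.
  intros H. unfold DerC. f_equal; apply Derive_ext_loc;
    apply (filter_imp _ _ (fun r E => f_equal _ E) H).
Qed.

Lemma ex_derC_ext_loc f g s : locally s (fun r => f r = g r) -> ex_derC f s -> ex_derC g s.
Proof.
  intros H [H1 H2].
  split; [apply (ex_derive_ext_loc (fun r => fst (f r)))
         |apply (ex_derive_ext_loc (fun r => snd (f r)))];
    try assumption; apply (filter_imp _ _ (fun r E => f_equal _ E) H).
Qed.

Definition trig_poly (q : R) (a : nat -> C) (L : nat) (t : R) : C :=
  csum (fun p => Cmult (eiC ((INR p + q) * t)) (a p)) L.

Lemma ex_derC_eiC w t : ex_derC (fun s => eiC (w * s)) t.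
Proof. split; unfold eiC; simpl; auto_derive; auto. Qed.

Lemma DerC_eiC w t : DerC (fun s => eiC (w * s)) t = Cmult (eiC (w * t)) (0, w).
Proof.
  unfold DerC, eiC; apply injective_projections; simpl;
    apply is_derive_unique; auto_derive; auto; ring.
Qed.

Lemma ex_derC_trig_poly_term q a p t :
  ex_derC (fun s => Cmult (eiC ((INR p + q) * s)) (a p)) t.
Proof.
  apply (ex_derC_mult (fun s => eiC ((INR p + q) * s)) (fun _ => a p));
    [apply ex_derC_eiC|apply ex_derC_const].
Qed.

Lemma DerC_trig_poly q a L t :
  DerC (trig_poly q a L) t = trig_poly q (fun p => Cmult (0, INR p + q) (a p)) L t.
Proof.
  unfold trig_poly.
  rewrite (DerC_csum (fun s p => Cmult (eiC ((INR p + q) * s)) (a p)))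
    by (intros; apply ex_derC_trig_poly_term).
  apply csum_ext. intros p _.
  rewrite (DerC_mult (fun s => eiC ((INR p + q) * s)) (fun _ => a p)), DerC_eiC, DerC_const;
    [ring | apply ex_derC_eiC | apply ex_derC_const].
Qed.

(* The discrete analogue of the coefficient of the mode e^{-ist}, sampled at M angles. *)
Definition Dft (M : nat) (s : R) (g : R -> C) : C :=
  Cmult (RtoC (/ INR M)) (csum (fun j => Cmult (g (sample M j)) (eiC (s * sample M j))) M).

Lemma Dft_ext M s f g : (forall t, f t = g t) -> Dft M s f = Dft M s g.
Proof. intros H. unfold Dft. f_equal. apply csum_ext. intros j _. now rewrite H. Qed.

Lemma Dft_trig_poly M q a L d s :
  (0 < L)%nat -> (L + d <= M)%nat -> s = INR d - q ->
  Dft M s (trig_poly q a L) = if Nat.eqb d 0 then a O else RtoC 0.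
Proof.
  intros HL HLM Hs. assert (HM : 0 < INR M) by (apply lt_0_INR; lia).
  unfold Dft, trig_poly.
  rewrite (csum_ext _
    (fun j => csum (fun p => Cmult (a p) (eiC (INR (p + d) * sample M j))) L)).
  2:{ intros j _. rewrite <- csum_mult_r. apply csum_ext. intros p _.
      rewrite plus_INR.
      replace ((INR p + INR d) * sample M j) with ((INR p + q) * sample M j + s * sample M j)
        by (subst; ring).
      rewrite eiC_add. ring. }
  rewrite csum_switch.
  rewrite (csum_ext _
    (fun p => Cmult (a p) (if Nat.eqb (p + d) 0 then RtoC (INR M) else RtoC 0)))
    by (intros p Hp; rewrite csum_mult_l, csum_eiC_samples by lia; reflexivity).
  destruct L as [|L]; [lia|]. rewrite csum_S_l.
  rewrite (csum_ext _ (fun _ => RtoC 0)), csum_const0.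
  2:{ intros p _.
      replace (Nat.eqb (S p + d) 0) with false by (symmetry; apply Nat.eqb_neq; lia). ring. }
  destruct (Nat.eqb_spec d 0) as [->|Hd]; cbn [Nat.add Nat.eqb].
  - apply injective_projections; cbn [fst snd Cplus Cmult RtoC]; field; lra.
  - replace (Nat.eqb d 0) with false by (symmetry; apply Nat.eqb_neq; lia). ring.
Qed.

Lemma Dft_plus M s f g :
  Dft M s (fun t => Cplus (f t) (g t)) = Cplus (Dft M s f) (Dft M s g).
Proof.
  unfold Dft. rewrite <- Cmult_plus_distr_l, <- csum_plus. f_equal.
  apply csum_ext. intros. ring.
Qed.

Lemma Dft_scal M s k f : Dft M s (fun t => Cmult k (f t)) = Cmult k (Dft M s f).
Proof.
  unfold Dft.
  rewrite (csum_ext _ (fun j => Cmult k (Cmult (f (sample M j)) (eiC (s * sample M j)))))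
    by (intros; ring).
  rewrite csum_mult_l. ring.
Qed.

Lemma Dft_const0 M s : Dft M s (fun _ => RtoC 0) = RtoC 0.
Proof.
  unfold Dft. rewrite (csum_ext _ (fun _ => RtoC 0)), csum_const0; [ring|]. intros. ring.
Qed.

Lemma Dft_lincomb M s h k s1 f1 s2 f2 :
  (forall t, Cmult (h t) (eiC (s * t)) =
     Cmult k (Cplus (Cmult (f1 t) (eiC (s1 * t))) (Cmult (f2 t) (eiC (s2 * t))))) ->
  Dft M s h = Cmult k (Cplus (Dft M s1 f1) (Dft M s2 f2)).
Proof.
  intros H. unfold Dft.
  rewrite (csum_ext _ (fun j => Cmult k (Cplus (Cmult (f1 (sample M j)) (eiC (s1 * sample M j)))
                                              (Cmult (f2 (sample M j)) (eiC (s2 * sample M j))))))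
    by (intros; apply H).
  rewrite csum_mult_l, csum_plus. ring.
Qed.

(* [cos t e^{ist} = (e^{i(s+1)t} + e^{i(s-1)t})/2],
   [sin t e^{ist} = -i (e^{i(s+1)t} - e^{i(s-1)t})/2]. *)
Lemma Dft_cos_sin M s f g :
  Dft M s (fun t => Cplus (Cmult (RtoC (cos t)) (f t)) (Cmult (RtoC (sin t)) (g t))) =
  Cmult (RtoC (/ 2))
    (Cplus (Dft M (s + 1) (fun t => Cplus (f t) (Cmult (0, -1) (g t))))
           (Dft M (s - 1) (fun t => Cplus (f t) (Cmult Ci (g t))))).
Proof.
  apply Dft_lincomb. intros t.
  replace ((s + 1) * t) with (s * t + t) by ring.
  replace ((s - 1) * t) with (s * t + - t) by ring.
  rewrite !eiC_add. unfold eiC. rewrite cos_neg, sin_neg.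
  apply injective_projections; cbn [fst snd Cplus Cmult RtoC Ci]; field.
Qed.

Lemma ex_derC_Dft M s (F : R -> R -> C) x :
  (forall t, ex_derC (fun r => F r t) x) -> ex_derC (fun r => Dft M s (F r)) x.
Proof.
  intros H. unfold Dft.
  apply (ex_derC_mult (fun _ => RtoC _)); [apply ex_derC_const|].
  apply ex_derC_csum. intros j _.
  apply (ex_derC_mult (fun r => F r (sample M j)) (fun _ => eiC (s * sample M j)));
    [apply H|apply ex_derC_const].
Qed.

Lemma DerC_Dft M s (F : R -> R -> C) x :
  (forall t, ex_derC (fun r => F r t) x) ->
  DerC (fun r => Dft M s (F r)) x = Dft M s (fun t => DerC (fun r => F r t) x).
Proof.
  intros H.
  assert (Hj : forall j, ex_derC (fun r => Cmult (F r (sample M j)) (eiC (s * sample M j))) x)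
    by (intros j; apply (ex_derC_mult (fun r => F r (sample M j)) (fun _ => _));
        [apply H|apply ex_derC_const]).
  unfold Dft.
  rewrite (DerC_mult (fun _ => RtoC (/ INR M))), DerC_const, DerC_csum;
    [| intros; apply Hj | apply ex_derC_const | apply ex_derC_csum; intros; apply Hj].
  rewrite Cmult_0_l, Cplus_0_l. f_equal. apply csum_ext. intros j _.
  rewrite (DerC_mult (fun r => F r (sample M j)) (fun _ => eiC (s * sample M j))), DerC_const;
    [ring | apply H | apply ex_derC_const].
Qed.

Lemma ex_derC_lincomb f g a a' s : ex_derC f s -> ex_derC g s ->
  ex_derC (fun r => Cplus (Cmult (f r) a) (Cmult (g r) a')) s.
Proof.
  intros Hf Hg.
  apply ex_derC_plus; [apply (ex_derC_mult f (fun _ => a))|apply (ex_derC_mult g (fun _ => a'))];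
    auto using ex_derC_const.
Qed.

Lemma DerC_lincomb f g a a' s : ex_derC f s -> ex_derC g s ->
  DerC (fun r => Cplus (Cmult (f r) a) (Cmult (g r) a')) s =
  Cplus (Cmult (DerC f s) a) (Cmult (DerC g s) a').
Proof.
  intros Hf Hg.
  assert (Hfa := ex_derC_mult f (fun _ => a) s Hf (ex_derC_const a s)).
  assert (Hga := ex_derC_mult g (fun _ => a') s Hg (ex_derC_const a' s)).
  rewrite DerC_plus by assumption.
  rewrite (DerC_mult f (fun _ => a)), (DerC_mult g (fun _ => a')), !DerC_const
    by auto using ex_derC_const.
  ring.
Qed.

Definition ex_derM (f : R -> M2) (s : R) : Prop :=
  ex_derC (fun r => m11 (f r)) s /\ ex_derC (fun r => m12 (f r)) s /\
  ex_derC (fun r => m21 (f r)) s /\ ex_derC (fun r => m22 (f r)) s.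

Lemma ex_derC2_M2app f xi s : ex_derM f s -> ex_derC2 (fun r => M2app (f r) xi) s.
Proof. intros (H11 & H12 & H21 & H22). split; apply ex_derC_lincomb; assumption. Qed.

Lemma DerC2_M2app f xi s : ex_derM f s ->
  DerC2 (fun r => M2app (f r) xi) s = M2app (DerM f s) xi.
Proof.
  intros (H11 & H12 & H21 & H22). unfold DerC2, DerM. cbn [fst snd M2app m11 m12 m21 m22].
  rewrite !DerC_lincomb by assumption. reflexivity.
Qed.

Lemma ex_derC2_scal_R (e : R -> R) g s : ex_derive e s -> ex_derC2 g s ->
  ex_derC2 (fun r => C2scal (RtoC (e r)) (g r)) s.
Proof.
  intros He [H1 H2].
  split; apply (ex_derC_mult (fun r => RtoC (e r))); auto using ex_derC_RtoC.
Qed.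

Lemma DerC2_scal_R (e : R -> R) e' g s : is_derive e s e' -> ex_derC2 g s ->
  DerC2 (fun r => C2scal (RtoC (e r)) (g r)) s =
  C2add (C2scal (RtoC e') (g s)) (C2scal (RtoC (e s)) (DerC2 g s)).
Proof.
  intros He [H1 H2]. assert (He' : ex_derive e s) by (exists e'; exact He).
  unfold DerC2. cbn [fst snd C2scal C2add].
  rewrite !(DerC_mult (fun r => RtoC (e r))), !DerC_RtoC, (is_derive_unique _ _ _ He)
    by auto using ex_derC_RtoC.
  reflexivity.
Qed.

Lemma DerC2_const k s : DerC2 (fun _ => k) s = C2zero.
Proof. unfold DerC2. rewrite !DerC_const. reflexivity. Qed.

Lemma DerC2_ext_loc f g s : locally s (fun r => f r = g r) -> DerC2 f s = DerC2 g s.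
Proof.
  intros H. unfold DerC2. f_equal; apply DerC_ext_loc;
    apply (filter_imp _ _ (fun r E => f_equal _ E) H).
Qed.

Lemma ex_derC2_ext_loc f g s : locally s (fun r => f r = g r) -> ex_derC2 f s -> ex_derC2 g s.
Proof.
  intros H [H1 H2].
  split; [apply (ex_derC_ext_loc (fun r => fst (f r)))
         |apply (ex_derC_ext_loc (fun r => snd (f r)))];
    try assumption; apply (filter_imp _ _ (fun r E => f_equal _ E) H).
Qed.

Definition DftC2 (M : nat) (s : R) (f : R -> C2) : C2 :=
  (Dft M s (fun t => fst (f t)), Dft M s (fun t => snd (f t))).

Lemma DftC2_add M s f g :
  DftC2 M s (fun t => C2add (f t) (g t)) = C2add (DftC2 M s f) (DftC2 M s g).
Proof. unfold DftC2. cbn [fst snd C2add]. rewrite !Dft_plus. reflexivity. Qed.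

Lemma DftC2_scal M s k f : DftC2 M s (fun t => C2scal k (f t)) = C2scal k (DftC2 M s f).
Proof. unfold DftC2. cbn [fst snd C2scal]. rewrite !Dft_scal. reflexivity. Qed.

Lemma DftC2_M2app M s P f : DftC2 M s (fun t => M2app P (f t)) = M2app P (DftC2 M s f).
Proof.
  unfold DftC2. cbn [fst snd M2app]. rewrite !Dft_plus, !Dft_scal. reflexivity.
Qed.

Lemma DftC2_zero M s : DftC2 M s (fun _ => C2zero) = C2zero.
Proof. unfold DftC2. cbn [fst snd C2zero]. rewrite Dft_const0. reflexivity. Qed.

Lemma DftC2_cos_sin M s f g :
  DftC2 M s (fun t => C2add (C2scal (RtoC (cos t)) (f t)) (C2scal (RtoC (sin t)) (g t))) =
  C2scal (RtoC (/ 2))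
    (C2add (DftC2 M (s + 1) (fun t => C2add (f t) (C2scal (0, -1) (g t))))
           (DftC2 M (s - 1) (fun t => C2add (f t) (C2scal Ci (g t))))).
Proof. unfold DftC2. cbn [fst snd C2add C2scal]. rewrite !Dft_cos_sin. reflexivity. Qed.

Lemma DftC2_DerC2_loc M s (F : R -> R -> C2) (G : R -> C2) r0 :
  (forall t, ex_derC2 (fun r => F r t) r0) ->
  locally r0 (fun r => DftC2 M s (F r) = G r) ->
  ex_derC2 G r0 /\ DftC2 M s (fun t => DerC2 (fun r => F r t) r0) = DerC2 G r0.
Proof.
  intros HF HG.
  assert (Hfst : forall t, ex_derC (fun r => fst (F r t)) r0) by apply HF.
  assert (Hsnd : forall t, ex_derC (fun r => snd (F r t)) r0) by apply HF.
  split.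
  - apply (ex_derC2_ext_loc (fun r => DftC2 M s (F r))); [exact HG|].
    split; [apply (ex_derC_Dft M s (fun r t => fst (F r t)))
           |apply (ex_derC_Dft M s (fun r t => snd (F r t)))]; assumption.
  - rewrite <- (DerC2_ext_loc _ _ _ HG). unfold DftC2, DerC2. cbn [fst snd].
    rewrite (DerC_Dft M s (fun r t => fst (F r t))), (DerC_Dft M s (fun r t => snd (F r t)))
      by assumption.
    reflexivity.
Qed.

Lemma M2app_zero_l xi : M2app M2zero xi = C2zero.
Proof. ring_C2. Qed.

Lemma M2app_add_l a a' xi : M2app (M2add a a') xi = C2add (M2app a xi) (M2app a' xi).
Proof. ring_C2. Qed.

Lemma M2app_scal_l k a xi : M2app (M2scal k a) xi = C2scal k (M2app a xi).
Proof. ring_C2. Qed.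

Lemma M2app_scal_r a k v : M2app a (C2scal k v) = C2scal k (M2app a v).
Proof. ring_C2. Qed.

Lemma C2scal_RtoC_eq0 e v : e <> 0 -> C2scal (RtoC e) v = C2zero -> v = C2zero.
Proof.
  intros He H. transitivity (C2scal (RtoC (/ e)) (C2scal (RtoC e) v)).
  - apply injective_projections; apply injective_projections;
      cbn [fst snd C2scal Cmult RtoC]; field; exact He.
  - rewrite H. ring_C2.
Qed.

Lemma fold_right_map_seq f a L :
  fold_right Cplus (RtoC 0) (map f (seq a L)) = csum (fun p => f (a + p)%nat) L.
Proof.
  revert a. induction L as [|L IH]; intros a; [reflexivity|].
  cbn [seq map fold_right]. rewrite csum_S_l, IH, Nat.add_0_r. f_equal.
  apply csum_ext. intros p _. f_equal. lia.
Qed.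

Lemma fourier_sum_trig_poly (pr : M2 -> C) N c x y t :
  pr M2zero = RtoC 0 ->
  (forall a a', pr (M2add a a') = Cplus (pr a) (pr a')) ->
  (forall k a, pr (M2scal k a) = Cmult k (pr a)) ->
  pr (fourier_sum N c x y t) =
  trig_poly (- INR N) (fun p => pr (c (Z.of_nat p - Z.of_nat N)%Z x y)) (2 * N + 1) t.
Proof.
  intros Hzero Hadd Hscal. unfold fourier_sum, trig_poly.
  transitivity (fold_right Cplus (RtoC 0)
    (map (fun j => pr (M2scal (eiC (IZR (Z.of_nat j - Z.of_nat N) * t))
                              (c (Z.of_nat j - Z.of_nat N)%Z x y))) (seq 0 (2 * N + 1)))).
  - induction (seq 0 (2 * N + 1)) as [|j l IH]; cbn [map fold_right]; [exact Hzero|].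
    rewrite Hadd, IH. reflexivity.
  - rewrite fold_right_map_seq. apply csum_ext. intros p _. cbn [Nat.add].
    rewrite Hscal, minus_IZR, <- !INR_IZR_INZ. reflexivity.
Qed.

Lemma smooth3_ex_derive U f x y t : smooth3_on U f -> U x y ->
  ex_derive (fun r => f r y t) x /\ ex_derive (fun r => f x r t) y /\
  ex_derive (fun r => f x y r) t.
Proof. intros H Hxy. destruct (H nil x y t Hxy) as (_ & Hx & Hy & Ht). auto. Qed.

Lemma smoothM3_ex_derM U f x y t : smoothM3_on U f -> U x y ->
  ex_derM (fun r => f r y t) x /\ ex_derM (fun r => f x r t) y /\ ex_derM (fun r => f x y r) t.
Proof.
  intros ([H1 H2] & [H3 H4] & [H5 H6] & [H7 H8]) Hxy.
  destruct (smooth3_ex_derive _ _ x y t H1 Hxy) as (? & ? & ?),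
    (smooth3_ex_derive _ _ x y t H2 Hxy) as (? & ? & ?),
    (smooth3_ex_derive _ _ x y t H3 Hxy) as (? & ? & ?),
    (smooth3_ex_derive _ _ x y t H4 Hxy) as (? & ? & ?),
    (smooth3_ex_derive _ _ x y t H5 Hxy) as (? & ? & ?),
    (smooth3_ex_derive _ _ x y t H6 Hxy) as (? & ? & ?),
    (smooth3_ex_derive _ _ x y t H7 Hxy) as (? & ? & ?),
    (smooth3_ex_derive _ _ x y t H8 Hxy) as (? & ? & ?).
  repeat split; assumption.
Qed.

Lemma open2_locally_x U x y : open2 U -> U x y -> locally x (fun r => U r y).
Proof.
  intros HU Hxy. destruct (HU x y Hxy) as (e & He & H). exists (mkposreal e He).
  intros r Hr. apply H; [exact Hr|]. rewrite Rminus_eq_0, Rabs_R0. exact He.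
Qed.

Lemma open2_locally_y U x y : open2 U -> U x y -> locally y (fun r => U x r).
Proof.
  intros HU Hxy. destruct (HU x y Hxy) as (e & He & H). exists (mkposreal e He).
  intros r Hr. apply H; [|exact Hr]. rewrite Rminus_eq_0, Rabs_R0. exact He.
Qed.

Lemma M2app_Xgeod_A_SM lam Ax Ay b x y t xi :
  ex_derM (fun r => b r y t) x -> ex_derM (fun r => b x r t) y -> ex_derM (fun r => b x y r) t ->
  M2app (M2add (Xgeod lam b x y t) (M2mul (A_SM lam Ax Ay x y t) (b x y t))) xi =
  C2scal (RtoC (exp (- lam x y)))
    (C2add
       (C2scal (RtoC (cos t))
          (C2add (C2add (DerC2 (fun r => M2app (b r y t) xi) x)
                        (M2app (Ax x y) (M2app (b x y t) xi)))
                 (C2scal (RtoC (Derive (fun r => lam x r) y))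
                         (DerC2 (fun r => M2app (b x y r) xi) t))))
       (C2scal (RtoC (sin t))
          (C2add (C2add (DerC2 (fun r => M2app (b x r t) xi) y)
                        (M2app (Ay x y) (M2app (b x y t) xi)))
                 (C2scal (RtoC (- Derive (fun r => lam r y) x))
                         (DerC2 (fun r => M2app (b x y r) xi) t))))).
Proof.
  intros Hx Hy Ht. rewrite !DerC2_M2app by assumption. unfold Xgeod, A_SM.
  (* [ring] would treat copies of a derivative differing only in elaborated binder types as
     distinct atoms; [set] identifies them. *)
  set (DX := DerM (fun r => b r y t) x). set (DY := DerM (fun r => b x r t) y).
  set (DT := DerM (fun r => b x y r) t).
  set (lx := Derive (fun r => lam r y) x). set (ly := Derive (fun r => lam x r) y).
  ring_C2.
Qed.

Lemma is_derive_exp_comp (f : R -> R) s :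
  ex_derive f s -> is_derive (fun r => exp (f r)) s (exp (f s) * Derive f s).
Proof. intros Hf. auto_derive; [exact Hf | rewrite Rmult_1_l; apply Rmult_comm]. Qed.

Lemma dbar_exp_scal (f : R -> R -> R) (g : R -> R -> C2) (x y : R) :
  ex_derive (fun r : R => f r y) x -> ex_derive (fun r : R => f x r) y ->
  ex_derC2 (fun r => g r y) x -> ex_derC2 (fun r => g x r) y ->
  dbar (fun x y => C2scal (RtoC (exp (f x y))) (g x y)) x y =
  C2scal (RtoC (exp (f x y)))
    (C2add (dbar g x y)
           (C2scal (Derive (fun r => f r y) x / 2, Derive (fun r => f x r) y / 2) (g x y))).
Proof.
  intros Hfx Hfy Hgx Hgy.
  pose proof (is_derive_exp_comp _ _ Hfx) as Ex. pose proof (is_derive_exp_comp _ _ Hfy) as Ey.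
  unfold dbar.
  rewrite (DerC2_scal_R _ _ _ _ Ex Hgx), (DerC2_scal_R _ _ _ _ Ey Hgy).
  ring_C2.
Qed.

Section FourierModes.

Variables (U : R -> R -> Prop) (b : R -> R -> R -> M2) (N : nat) (c : Z -> R -> R -> M2)
  (xi : C2).
Hypothesis b_fourier : forall x y t, U x y -> b x y t = fourier_sum N c x y t.

Local Notation w x y t := (M2app (b x y t) xi).
Local Notation u x y := (M2app (c (- Z.of_nat N)%Z x y) xi).

Section Component.

Variable pr : C2 -> C.
Hypotheses (pr_zero : pr C2zero = RtoC 0)
  (pr_add : forall v v', pr (C2add v v') = Cplus (pr v) (pr v'))
  (pr_scal : forall k v, pr (C2scal k v) = Cmult k (pr v)).

Lemma component_trig_poly x y t : U x y ->
  pr (w x y t) =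
  trig_poly (- INR N) (fun p => pr (M2app (c (Z.of_nat p - Z.of_nat N)%Z x y) xi))
    (2 * N + 1) t.
Proof.
  intros Hxy. rewrite b_fourier by exact Hxy.
  apply (fourier_sum_trig_poly (fun a => pr (M2app a xi))); intros.
  - rewrite M2app_zero_l. exact pr_zero.
  - rewrite M2app_add_l. apply pr_add.
  - rewrite M2app_scal_l. apply pr_scal.
Qed.

Lemma Dft_component_mode x y d s : U x y -> (d <= 2)%nat -> s = INR d + INR N ->
  Dft (2 * N + 3) s (fun t => pr (w x y t)) = if Nat.eqb d 0 then pr (u x y) else RtoC 0.
Proof.
  intros Hxy Hd Hs.
  rewrite (Dft_ext _ _ _ _ (fun t => component_trig_poly x y t Hxy)).
  rewrite (Dft_trig_poly _ _ _ _ d) by (lia || (rewrite Hs; ring)).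
  rewrite Z.sub_0_l. reflexivity.
Qed.

Lemma Dft_component_dt_mode x y d s : U x y -> (d <= 2)%nat -> s = INR d + INR N ->
  Dft (2 * N + 3) s (fun t => DerC (fun r => pr (w x y r)) t) =
  if Nat.eqb d 0 then Cmult (0, - INR N) (pr (u x y)) else RtoC 0.
Proof.
  intros Hxy Hd Hs.
  rewrite (functional_extensionality _ _ (fun r => component_trig_poly x y r Hxy)).
  rewrite (Dft_ext _ _ _ _ (DerC_trig_poly _ _ _)).
  rewrite (Dft_trig_poly _ _ _ _ d) by (lia || (rewrite Hs; ring)).
  rewrite Z.sub_0_l, Rplus_0_l. reflexivity.
Qed.

End Component.

Lemma DftC2_w_mode x y d s : U x y -> (d <= 2)%nat -> s = INR d + INR N ->
  DftC2 (2 * N + 3) s (fun t => w x y t) = if Nat.eqb d 0 then u x y else C2zero.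
Proof.
  intros Hxy Hd Hs. unfold DftC2.
  rewrite (Dft_component_mode fst eq_refl (fun _ _ => eq_refl) (fun _ _ => eq_refl) x y d s),
    (Dft_component_mode snd eq_refl (fun _ _ => eq_refl) (fun _ _ => eq_refl) x y d s)
    by assumption.
  destruct (Nat.eqb d 0); reflexivity.
Qed.

Lemma DftC2_dt_w_mode x y d s : U x y -> (d <= 2)%nat -> s = INR d + INR N ->
  DftC2 (2 * N + 3) s (DerC2 (fun r => w x y r)) =
  if Nat.eqb d 0 then C2scal (0, - INR N) (u x y) else C2zero.
Proof.
  intros Hxy Hd Hs. unfold DftC2, DerC2. cbn [fst snd].
  rewrite (Dft_component_dt_mode fst eq_refl (fun _ _ => eq_refl) (fun _ _ => eq_refl) x y d s),
    (Dft_component_dt_mode snd eq_refl (fun _ _ => eq_refl) (fun _ _ => eq_refl) x y d s)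
    by assumption.
  destruct (Nat.eqb d 0); reflexivity.
Qed.

Lemma modes_along (X Y : R -> R) r0 :
  locally r0 (fun r => U (X r) (Y r)) ->
  (forall t, ex_derC2 (fun r => w (X r) (Y r) t) r0) ->
  ex_derC2 (fun r => u (X r) (Y r)) r0 /\
  DftC2 (2 * N + 3) (INR N) (fun t => DerC2 (fun r => w (X r) (Y r) t) r0) =
    DerC2 (fun r => u (X r) (Y r)) r0 /\
  DftC2 (2 * N + 3) (INR N + 2) (fun t => DerC2 (fun r => w (X r) (Y r) t) r0) = C2zero.
Proof.
  intros HU Hw.
  destruct (DftC2_DerC2_loc (2 * N + 3) (INR N) (fun r t => w (X r) (Y r) t)
              (fun r => u (X r) (Y r)) r0 Hw) as [Hex HN].
  { eapply filter_imp; [|exact HU]. intros r Hr.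
    exact (DftC2_w_mode (X r) (Y r) 0 (INR N) Hr ltac:(lia) ltac:(simpl; ring)). }
  destruct (DftC2_DerC2_loc (2 * N + 3) (INR N + 2) (fun r t => w (X r) (Y r) t)
              (fun _ => C2zero) r0 Hw) as [_ HN2].
  { eapply filter_imp; [|exact HU]. intros r Hr.
    exact (DftC2_w_mode (X r) (Y r) 2 (INR N + 2) Hr ltac:(lia) ltac:(simpl; ring)). }
  rewrite DerC2_const in HN2. auto.
Qed.

Hypotheses (U_open : open2 U) (b_smooth : smoothM3_on U b).

Lemma modes_dx x y : U x y ->
  ex_derC2 (fun r => u r y) x /\
  DftC2 (2 * N + 3) (INR N) (fun t => DerC2 (fun r => w r y t) x) = DerC2 (fun r => u r y) x /\
  DftC2 (2 * N + 3) (INR N + 2) (fun t => DerC2 (fun r => w r y t) x) = C2zero.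
Proof.
  intros Hxy. apply (modes_along (fun r => r) (fun _ => y)).
  - exact (open2_locally_x U x y U_open Hxy).
  - intros t. apply ex_derC2_M2app, (smoothM3_ex_derM U b x y t b_smooth Hxy).
Qed.

Lemma modes_dy x y : U x y ->
  ex_derC2 (fun r => u x r) y /\
  DftC2 (2 * N + 3) (INR N) (fun t => DerC2 (fun r => w x r t) y) = DerC2 (fun r => u x r) y /\
  DftC2 (2 * N + 3) (INR N + 2) (fun t => DerC2 (fun r => w x r t) y) = C2zero.
Proof.
  intros Hxy. apply (modes_along (fun _ => x) (fun r => r)).
  - exact (open2_locally_y U x y U_open Hxy).
  - intros t. apply ex_derC2_M2app, (smoothM3_ex_derM U b x y t b_smooth Hxy).
Qed.

Lemma mode_equation lam Ax Ay x y : U x y ->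
  (forall t, M2add (Xgeod lam b x y t) (M2mul (A_SM lam Ax Ay x y t) (b x y t)) = M2zero) ->
  C2add (C2add (dbar (fun x y => u x y) x y)
               (C2scal (- INR N * Derive (fun r => lam r y) x / 2,
                        - INR N * Derive (fun r => lam x r) y / 2) (u x y)))
        (M2app (Azbar Ax Ay x y) (u x y)) = C2zero.
Proof.
  intros Hxy Htransport.
  set (lx := Derive (fun r => lam r y) x). set (ly := Derive (fun r => lam x r) y).
  assert (Hcos_sin : forall t,
    C2add (C2scal (RtoC (cos t))
             (C2add (C2add (DerC2 (fun r => w r y t) x) (M2app (Ax x y) (w x y t)))
                    (C2scal (RtoC ly) (DerC2 (fun r => w x y r) t))))
          (C2scal (RtoC (sin t))
             (C2add (C2add (DerC2 (fun r => w x r t) y) (M2app (Ay x y) (w x y t)))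
                    (C2scal (RtoC (- lx)) (DerC2 (fun r => w x y r) t)))) = C2zero).
  { intros t. destruct (smoothM3_ex_derM U b x y t b_smooth Hxy) as (Hx & Hy & Ht).
    apply (C2scal_RtoC_eq0 (exp (- lam x y))); [apply Rgt_not_eq, exp_pos|].
    pose proof (M2app_Xgeod_A_SM lam Ax Ay b x y t xi Hx Hy Ht) as E.
    rewrite Htransport, M2app_zero_l in E. symmetry. exact E. }
  (* the mode e^{-i(N+1)t} *)
  assert (HD := f_equal (DftC2 (2 * N + 3) (INR N + 1))
                  (functional_extensionality _ (fun _ => C2zero) Hcos_sin)).
  cbv beta in HD. rewrite DftC2_zero, DftC2_cos_sin in HD.
  replace (INR N + 1 + 1) with (INR N + 2) in HD by ring.
  replace (INR N + 1 - 1) with (INR N) in HD by ring.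
  repeat rewrite ?DftC2_add, ?DftC2_scal, ?DftC2_M2app in HD.
  destruct (modes_dx x y Hxy) as (_ & HxN & HxN2), (modes_dy x y Hxy) as (_ & HyN & HyN2).
  rewrite HxN, HxN2, HyN, HyN2, (DftC2_w_mode x y 0 (INR N)),
    (DftC2_w_mode x y 2 (INR N + 2)), (DftC2_dt_w_mode x y 0 (INR N)),
    (DftC2_dt_w_mode x y 2 (INR N + 2)) in HD
    by (assumption || lia || (simpl; ring)).
  cbn [Nat.eqb] in HD. unfold dbar. etransitivity; [|exact HD]. ring_C2.
Qed.

End FourierModes.

Theorem lemma5p1
  (U : R -> R -> Prop) (lam : R -> R -> R) (Ax Ay : R -> R -> M2)
  (b : R -> R -> R -> M2) (N : nat) (c : Z -> R -> R -> M2) (xi : C2) :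
  open2 U ->
  smooth2_on U lam ->
  smoothM2_on U Ax -> smoothM2_on U Ay ->
  (forall x y, U x y -> in_su2 (Ax x y) /\ in_su2 (Ay x y)) ->
  smoothM3_on U b ->
  (forall x y t, U x y -> in_SU2 (b x y t)) ->
  (forall x y t, U x y ->
     M2add (Xgeod lam b x y t) (M2mul (A_SM lam Ax Ay x y t) (b x y t)) = M2zero) ->
  (1 <= N)%nat ->
  (forall x y t, U x y -> b x y t = fourier_sum N c x y t) ->
  (exists x y, U x y /\ c (- Z.of_nat N)%Z x y <> M2zero) ->
  let v := fun x y =>
    C2scal (RtoC (exp (- INR N * lam x y))) (M2app (c (- Z.of_nat N)%Z x y) xi) in
  forall x y, U x y ->
    ex_derC2 (fun s => v s y) x /\ ex_derC2 (fun s => v x s) y /\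
    C2add (dbar v x y) (M2app (Azbar Ax Ay x y) (v x y)) = C2zero.
Proof.
  intros HU Hlam _ _ _ Hb _ Htransport _ Hbc _ v x y Hxy.
  destruct (smooth3_ex_derive U _ x y 0 Hlam Hxy) as (Hlx & Hly & _).
  assert (Hfx : ex_derive (fun r : R => - INR N * lam r y) x)
    by (apply ex_derive_scal; exact Hlx).
  assert (Hfy : ex_derive (fun r : R => - INR N * lam x r) y)
    by (apply ex_derive_scal; exact Hly).
  destruct (modes_dx U b N c xi Hbc HU Hb x y Hxy) as (Hux & _).
  destruct (modes_dy U b N c xi Hbc HU Hb x y Hxy) as (Huy & _).
  split; [|split].
  - apply ex_derC2_scal_R; [|exact Hux].
    exists (exp (- INR N * lam x y) * Derive (fun r => - INR N * lam r y) x).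
    exact (is_derive_exp_comp _ _ Hfx).
  - apply ex_derC2_scal_R; [|exact Huy].
    exists (exp (- INR N * lam x y) * Derive (fun r => - INR N * lam x r) y).
    exact (is_derive_exp_comp _ _ Hfy).
  - unfold v. rewrite (dbar_exp_scal (fun x y => - INR N * lam x y)
                         (fun x y => M2app (c (- Z.of_nat N)%Z x y) xi)) by assumption.
    rewrite (Derive_scal (fun r => lam r y)), (Derive_scal (fun r => lam x r)), M2app_scal_r.
    pose proof (mode_equation U b N c xi Hbc HU Hb lam Ax Ay x y Hxy
                  (fun t => Htransport x y t Hxy)) as E.
    apply (f_equal (C2scal (RtoC (exp (- INR N * lam x y))))) in E.
    replace (C2scal _ C2zero) with C2zero in E by ring_C2.
    etransitivity; [|exact E]. ring_C2.
Qed.
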